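(* Assume the linear-model assumption and the irrepresentable condition from the context. Let $S\subseteq S^*$ be fixed, and let real numbers $(\tilde Z_i)_{i\in[d]\setminus S}$ and positive numbers $(\varepsilon_i)_{i\in[d]\setminus S}$ be given. Suppose there exists $\hat i\in[d]\setminus S$ such that (a) $\hat i\in\arg\max_{i\in[d]\setminus S}\{|\tilde Z_i|+\varepsilon_i\}$; (b) $|\tilde Z_i-Z_i^S|\le\varepsilon_i$ for all $i\in[d]\setminus S$; (c) $|\tilde Z_{\hat i}|>\frac{1+\mu_{S^*}}{1-\mu_{S^*}}\varepsilon_{\hat i}$. Then $|Z_{\hat i}^S|>\mu_{S^*}\max_{i\in S^*}|Z_i^S|$.
   Context: $(x,y)$ is a square-integrable random pair with $x\in\mathbb{R}^d$. Linear-model assumption: $\mathbb{E}[x]=0$, $y=\langle\beta^*,x\rangle+\epsilon$, $\mathbb{E}[\epsilon\mid x]=0$; $S^*=\mathrm{supp}(\beta^* )$, $s^*=|S^*|$. $\Sigma$ is the covariance of $x$, $\Sigma_F$ its principal submatrix on $F\subseteq[d]$, and $\mu_F=\max_{j\notin F}\|\Sigma_F^{-1}\mathrm{Cov}(x_F,x_j)\|_1$. Irrepresentable condition: for all $|F|=s^*$, $\Sigma_F$ is invertible and $0\le\mu_F<1$. $\mathcal{R}(\beta)=\mathbb{E}[(y-\langle x,\beta\rangle)^2]$, $\beta^S\in\arg\min_{\mathrm{supp}(\beta)\subseteq S}\mathcal{R}(\beta)$, and $Z_i^S=\mathbb{E}[x_i(y-\langle x,\beta^S\rangle)]$. *)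

From HB Require Import structures.
From mathcomp Require Import all_boot all_order all_algebra.
From mathcomp Require Import all_classical all_reals all_analysis.
Set Implicit Arguments. Unset Strict Implicit. Unset Printing Implicit Defensive.
Import Order.TTheory GRing.Theory Num.Theory.
Local Open Scope classical_set_scope.
Local Open Scope ring_scope.

Section defs.
Context {dT : measure_display} {T : measurableType dT} {R : realType}.
Variable P : probability T R.
Variable n : nat.

Definition inner (beta : 'I_n -> R) (x : 'I_n -> T -> R) : T -> R :=
  fun w => \sum_(i < n) beta i * x i w.

Definition supp (beta : 'I_n -> R) : {set 'I_n} := [set i | beta i != 0].

Definition Sigma (x : 'I_n -> T -> R) : 'M[R]_n :=
  \matrix_(i, j) fine (covariance P (x i) (x j)).

Definition SigmaF (x : 'I_n -> T -> R) (F : {set 'I_n}) : 'M[R]_#|F| :=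
  \matrix_(a, b) Sigma x (enum_val a) (enum_val b).

Definition covFj (x : 'I_n -> T -> R) (F : {set 'I_n}) (j : 'I_n) : 'cV[R]_#|F| :=
  \col_a Sigma x (enum_val a) j.

Definition norm1 m (v : 'cV[R]_m) : R := \sum_(a < m) `|v a 0|.

(* mu_F = max_{j notin F} || Sigma_F^{-1} Cov(x_F, x_j) ||_1  (0 if no such j) *)
Definition muF (x : 'I_n -> T -> R) (F : {set 'I_n}) : R :=
  \big[Num.max/0]_(j | j \notin F) norm1 (invmx (SigmaF x F) *m covFj x F j).

Definition irrepresentable (x : 'I_n -> T -> R) (s : nat) : Prop :=
  forall F : {set 'I_n}, #|F| = s ->
    SigmaF x F \in unitmx /\ 0 <= muF x F /\ muF x F < 1.

Definition sigma_of (x : 'I_n -> T -> R) : set (set T) :=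
  <<s [set A | exists i B, measurable B /\ A = x i @^-1` B] >>.

(* E[e | x] = 0 (a.s.), i.e. E[e 1_A] = 0 for every A in sigma(x) *)
Definition cond_exp_zero (e : T -> R) (x : 'I_n -> T -> R) : Prop :=
  forall A, sigma_of x A -> ('E_P[e \* \1_A] = 0)%E.

Definition risk (x : 'I_n -> T -> R) (y : T -> R) (beta : 'I_n -> R) : \bar R :=
  'E_P[fun w => (y w - inner beta x w) ^+ 2].

Definition is_betaS (x : 'I_n -> T -> R) (y : T -> R) (S : {set 'I_n})
    (beta : 'I_n -> R) : Prop :=
  supp beta \subset S /\
  forall b, supp b \subset S -> (risk x y beta <= risk x y b)%E.

Definition Zres (x : 'I_n -> T -> R) (y : T -> R) (beta : 'I_n -> R) (i : 'I_n) : R :=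
  fine 'E_P[fun w => x i w * (y w - inner beta x w)].

End defs.

(* The proof has a probabilistic half and a deterministic half.
   - First-order optimality: if beta^S minimises the population risk among
     vectors supported in S, then Z_i^S = E[x_i (y - <x, beta^S>)] = 0 for
     every i in S.  Perturbing beta^S by t along coordinate i changes the risk
     by -2t E[x_i r] + t^2 E[x_i^2] (r the residual), and a linear function
     dominated by a nonnegative quadratic in t must vanish.
   - Deterministic comparison: with Z = 0 on S, the approximations
     |Zt_i - Z_i| <= eps_i and the argmax property of ihat bound every |Z_i|
     by |Zt_ihat| + eps_ihat, while |Z_ihat| >= |Zt_ihat| - eps_ihat;
     the margin condition (c) with 0 <= mu < 1 closes the gap.
   The theorem follows by combining the two with 0 <= mu_{S*} < 1 from the
   irrepresentable condition. *)
From HB Require Import structures.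
From mathcomp Require Import all_boot all_order all_algebra.
From mathcomp Require Import all_classical all_reals all_analysis.
From mathcomp Require Import ring lra.
Import Order.TTheory GRing.Theory Num.Theory.
Local Open Scope classical_set_scope.
Local Open Scope ring_scope.

(* A linear function of t dominated by a quadratic t^2 c with c >= 0 is zero:
   this is the scalar form of the first-order optimality condition. *)
Lemma linear_le_quadratic_eq0 (R : realFieldType) (a c : R) :
  0 <= c -> (forall t, 2 * t * a <= t ^+ 2 * c) -> a = 0.
Proof.
move=> c_ge0 hquad.
set s := (c + 1)^-1.
have s_gt0 : 0 < s by rewrite invr_gt0; lra.
have sc_le1 : s * c <= 1.
  have : s * (c + 1) = 1 by rewrite mulrC divff // gt_eqF //; lra.
  lra.
(* evaluate at t = s a: 2 s a^2 <= s^2 c a^2 <= s a^2 *)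
have := hquad (a * s).
have -> : 2 * (a * s) * a = s * (2 * a ^+ 2) by ring.
have -> : (a * s) ^+ 2 * c = s * ((s * c) * a ^+ 2) by ring.
rewrite ler_pM2l // => h.
have sca2_le : (s * c) * a ^+ 2 <= a ^+ 2 by rewrite ler_piMl // sqr_ge0.
have a2_le0 : a ^+ 2 <= 0 by lra.
have : a ^+ 2 = 0 by apply/le_anti; rewrite a2_le0 sqr_ge0.
by move/eqP; rewrite sqrf_eq0 => /eqP.
Qed.

Section FirstOrderOptimality.
Context {dT : measure_display} {T : measurableType dT} {R : realType}.
Context {P : probability T R} {n : nat} {x : 'I_n -> T -> R} {y : T -> R}.
Hypotheses (hx2 : forall i, x i \in Lfun P 2%:E) (hy2 : y \in Lfun P 2%:E).

Definition shift_coord (beta : 'I_n -> R) (i : 'I_n) (t : R) : 'I_n -> R :=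
  fun j => beta j + (if j == i then t else 0).

Lemma residual_Lfun2 (beta : 'I_n -> R) :
  (fun w => y w - inner beta x w) \in Lfun P 2%:E.
Proof.
have -> : (fun w => y w - inner beta x w) = y - \sum_(j < n) beta j *: x j.
  apply/funext => w; rewrite /inner /= fct_sumE.
  by congr (_ - _); apply: eq_bigr => j _; rewrite scalrfctE.
have h12 : (1 <= 2 :> \bar R)%E by rewrite lee_fin ler1n.
by apply: rpredB => //; apply: rpred_sum => j _; apply: rpredZ.
Qed.

Lemma inner_shift (beta : 'I_n -> R) (i : 'I_n) (t : R) (w : T) :
  inner (shift_coord beta i t) x w = inner beta x w + t * x i w.
Proof.
rewrite /inner /shift_coord; under eq_bigr do rewrite mulrDl.
rewrite big_split /=; congr (_ + _).
by rewrite (bigD1 i) //= eqxx big1 ?addr0 // => j /negbTE ->; rewrite mul0r.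
Qed.

Lemma risk_shift (beta : 'I_n -> R) (i : 'I_n) (t : R) :
  let r := fun w => y w - inner beta x w in
  risk P x y (shift_coord beta i t) =
    (fine 'E_P[r \* r] - 2 * t * fine 'E_P[x i \* r]
      + t ^+ 2 * fine 'E_P[x i \* x i])%:E.
Proof.
move=> r.
have hr : r \in Lfun P 2%:E by exact: residual_Lfun2.
have hA : r \* r \in Lfun P 1 by exact: Lfun2_mul_Lfun1.
have hB : x i \* r \in Lfun P 1 by exact: Lfun2_mul_Lfun1.
have hC : x i \* x i \in Lfun P 1 by exact: Lfun2_mul_Lfun1.
have -> : (risk P x y (shift_coord beta i t) =
    'E_P[(r \* r \+ ((- (2 * t)) \o* (x i \* r) \+ (t ^+ 2) \o* (x i \* x i)))%R])%E.
  rewrite /risk; congr (expectation P _); apply/funext => w.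
  by rewrite inner_shift /r /=; ring.
rewrite expectationD //; last by apply: rpredD; apply: Lfun_scale.
rewrite expectationD; try by apply: Lfun_scale.
rewrite !expectationZl //.
rewrite -(fineK (expectation_fin_num hA)) -(fineK (expectation_fin_num hB)).
rewrite -(fineK (expectation_fin_num hC)) -!EFinM -!EFinD /=.
by congr (_%:E); ring.
Qed.

Lemma Zres_eq0_on_support {S : {set 'I_n}} {betaS : 'I_n -> R} :
  is_betaS P x y S betaS -> forall i, i \in S -> Zres P x y betaS i = 0.
Proof.
move=> [/fintype.subsetP suppS minS] i iS.
set r := fun w => y w - inner betaS x w.
have -> : Zres P x y betaS i = fine 'E_P[x i \* r].
  by rewrite /Zres; congr fine; rewrite unlock.
have C_ge0 : 0 <= fine 'E_P[x i \* x i].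
  by rewrite fine_ge0 // expectation_ge0 // => w; rewrite /= -expr2 sqr_ge0.
apply: (@linear_le_quadratic_eq0 R _ _ C_ge0) => t.
have supp_shift : supp (shift_coord betaS i t) \subset S.
  apply/fintype.subsetP => j; rewrite inE /shift_coord; case: ifP => [/eqP -> //|_].
  by rewrite addr0 => hj; apply: suppS; rewrite inE.
have := minS _ supp_shift.
have hA : r \* r \in Lfun P 1 by apply: Lfun2_mul_Lfun1; exact: residual_Lfun2.
have -> : (risk P x y betaS = 'E_P[r \* r])%E.
  by rewrite /risk; congr (expectation P _); apply/funext => w; rewrite /= expr2.
by rewrite -(fineK (expectation_fin_num hA)) risk_shift lee_fin; lra.
Qed.

End FirstOrderOptimality.

Section GreedyComparison.
Context {F : realFieldType}.

Lemma norm_le_approx_add {z zt e : F} : `|zt - z| <= e -> `|z| <= `|zt| + e.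
Proof.
move=> h; have := ler_normB zt (zt - z).
by rewrite opprB addrC subrK; lra.
Qed.

Lemma approx_sub_le_norm {z zt e : F} : `|zt - z| <= e -> `|zt| - e <= `|z|.
Proof.
move=> h; have := ler_normD z (zt - z).
by rewrite addrC subrK; lra.
Qed.

Lemma greedy_margin {n : nat} {S : {set 'I_n}} (Sst : {set 'I_n})
    {Z Zt eps : 'I_n -> F} {mu : F} {ihat : 'I_n} :
  0 <= mu -> mu < 1 ->
  (forall i, i \in S -> Z i = 0) ->
  (forall i, i \notin S -> 0 < eps i) -> ihat \notin S ->
  (forall i, i \notin S -> `|Zt i| + eps i <= `|Zt ihat| + eps ihat) ->
  (forall i, i \notin S -> `|Zt i - Z i| <= eps i) ->
  `|Zt ihat| > (1 + mu) / (1 - mu) * eps ihat ->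
  `|Z ihat| > mu * \big[Num.max/0]_(i in Sst) `|Z i|.
Proof.
move=> mu_ge0 mu_lt1 ZS eps_gt0 ihat_S argmax approx margin.
set M := `|Zt ihat| + eps ihat.
have M_ge0 : 0 <= M by rewrite addr_ge0 // ltW // eps_gt0.
have max_le : \big[Num.max/0]_(i in Sst) `|Z i| <= M.
  apply: (big_ind (fun v => v <= M)) => // [a b ha hb|i _].
    by rewrite ge_max ha hb.
  have [iS|iS] := boolP (i \in S); first by rewrite ZS // normr0.
  by apply: le_trans (argmax _ iS); apply: norm_le_approx_add; exact: approx.
have Zihat_ge := approx_sub_le_norm (approx _ ihat_S).
have margin' : `|Zt ihat| * (1 - mu) > (1 + mu) * eps ihat.
  have h1m : 0 < 1 - mu by rewrite subr_gt0.
  have e : (1 + mu) / (1 - mu) * eps ihat * (1 - mu) = (1 + mu) * eps ihat.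
    by field; rewrite gt_eqF.
  by rewrite -e ltr_pM2r.
have : mu * \big[Num.max/0]_(i in Sst) `|Z i| <= mu * M by rewrite ler_wpM2l.
rewrite /M; nra.
Qed.

End GreedyComparison.

Theorem mainTheorem5 (dT : measure_display) (T : measurableType dT) (R : realType)
  (P : probability T R) (n : nat)
  (x : 'I_n -> T -> R) (y : T -> R) (betastar : 'I_n -> R)
  (* square-integrability of (x, y) *)
  (hx2 : forall i, x i \in Lfun P 2%:E) (hy2 : y \in Lfun P 2%:E)
  (* linear-model assumption *)
  (hEx : forall i, ('E_P[x i] = 0)%E)
  (hcond : cond_exp_zero P (fun w => y w - inner betastar x w) x)
  (* irrepresentable condition *)
  (hirr : irrepresentable P x #|supp betastar|)
  (S : {set 'I_n}) (hS : S \subset supp betastar)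
  (betaS : 'I_n -> R) (hbetaS : is_betaS P x y S betaS)
  (Zt eps : 'I_n -> R) (heps : forall i, i \notin S -> 0 < eps i)
  (ihat : 'I_n) (hihat : ihat \notin S)
  (ha : forall i, i \notin S -> `|Zt i| + eps i <= `|Zt ihat| + eps ihat)
  (hb : forall i, i \notin S -> `|Zt i - Zres P x y betaS i| <= eps i)
  (hc : `|Zt ihat| >
        (1 + muF P x (supp betastar)) / (1 - muF P x (supp betastar)) * eps ihat) :
  `|Zres P x y betaS ihat| >
    muF P x (supp betastar) *
      \big[Num.max/0]_(i in supp betastar) `|Zres P x y betaS i|.
Proof.
have [_ [mu_ge0 mu_lt1]] := hirr (supp betastar) erefl.
have ZS := Zres_eq0_on_support hx2 hy2 hbetaS.
exact: (greedy_margin (supp betastar) mu_ge0 mu_lt1 ZS heps hihat ha hb hc).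
Qed.
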